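(* $\mathrm{Ldim}(\mathcal N)=\infty$: for every $m\in\mathbb N$ there is a complete binary tree of depth $m$ shattered by $\mathcal N$.
   Context: $\mathcal N$ is the set of functions $f:[-1,1]\to\mathbb R$ of the form $f(x)=a_1\mathrm{ReLU}(w_1x+b_1)+a_2\mathrm{ReLU}(w_2x+b_2)+b$ with $w_1,w_2,b_1,b_2,a_1,a_2,b\in[-1,1]$, where $\mathrm{ReLU}(z)=\max\{0,z\}$. A complete binary tree of depth $m$ has internal nodes $v$ labeled by $x_v\in[-1,1]$, and the two edges leaving each internal node are labeled by two distinct real numbers; it is shattered by $\mathcal N$ if for every root-to-leaf path there exists $f\in\mathcal N$ with $f(x_v)$ equal to the label of the path's outgoing edge at $v$ for every node $v$ on the path. $\mathrm{Ldim}(\mathcal N)$ (the Littlestone dimension under $0/1$ loss) is the supremum of depths of shattered trees. *)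

From Stdlib Require Import Reals List.
Import ListNotations.
Open Scope R_scope.

Definition ReLU (z : R) : R := Rmax 0 z.

Definition in_unit (t : R) : Prop := -1 <= t <= 1.

Definition in_N (f : R -> R) : Prop :=
  exists w1 w2 b1 b2 a1 a2 b : R,
    in_unit w1 /\ in_unit w2 /\ in_unit b1 /\ in_unit b2 /\
    in_unit a1 /\ in_unit a2 /\ in_unit b /\
    forall x, in_unit x ->
      f x = a1 * ReLU (w1 * x + b1) + a2 * ReLU (w2 * x + b2) + b.

(* A complete binary tree: internal node v is identified with the path (list of
   left/right choices, false = left, true = right) from the root to v.
   node p = the label x_v of node p; edge p c = the label of the edge leaving p
   in direction c. *)
Record tree := mkTree { node : list bool -> R ; edge : list bool -> bool -> R }.

Definition valid_tree (m : nat) (T : tree) : Prop :=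
  forall p : list bool, (length p < m)%nat ->
    in_unit (node T p) /\ edge T p false <> edge T p true.

Definition shattered (m : nat) (T : tree) : Prop :=
  forall path : list bool, length path = m ->
    exists f, in_N f /\
      forall i : nat, (i < m)%nat ->
        f (node T (firstn i path)) = edge T (firstn i path) (nth i path false).

(* Label the node reached by the choices p by the signed binary number
   x_p = sum_k (±1) 2^-(k+1), the sign of the k-th digit being the k-th
   choice.  Every leaf t = x_path of a depth-m path lies at distance at least
   2^-m from each node on the path, to the right of the node exactly when the
   path turns right there.  Hence the clipped ramp
   x |-> ReLU (x - t) - ReLU (x - t - 2^-m), a member of N, takes the value 0
   at the nodes where the path turns right and 2^-m where it turns left:
   one edge labelling, namely 0 to the right and 2^-m to the left, is
   realised along every path at once. *)

From Stdlib Require Import Reals List Lra Lia.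
Import ListNotations.
Open Scope R_scope.

Definition sign (b : bool) : R := if b then 1 else -1.

Fixpoint binary_point (p : list bool) : R :=
  match p with
  | [] => 0
  | b :: q => sign b / 2 + binary_point q / 2
  end.

Lemma binary_point_bound (p : list bool) :
  - (1 - (/2) ^ length p) <= binary_point p <= 1 - (/2) ^ length p.
Proof.
  induction p as [|b p IH]; simpl; [lra|].
  destruct b; simpl; lra.
Qed.

Lemma binary_point_app (q r : list bool) :
  binary_point (q ++ r) = binary_point q + (/2) ^ length q * binary_point r.
Proof.
  induction q as [|b q IH]; simpl; rewrite ?IH; field.
Qed.

Lemma sign_binary_point_cons (b : bool) (r : list bool) :
  (/2) ^ length (b :: r) <= sign b * binary_point (b :: r).
Proof.
  pose proof (binary_point_bound r).
  destruct b; simpl; lra.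
Qed.

Lemma binary_point_separation (p : list bool) (i : nat) : (i < length p)%nat ->
  (/2) ^ length p <=
  sign (nth i p false) * (binary_point p - binary_point (firstn i p)).
Proof.
  intros Hi.
  destruct (nth_split p false Hi) as (q & r & Hp & Hq).
  set (b := nth i p false) in *; rewrite Hp.
  replace (firstn i (q ++ b :: r)) with q
    by (rewrite <- Hq, firstn_app, Nat.sub_diag, firstn_all, app_nil_r; easy).
  rewrite binary_point_app, length_app, pow_add.
  replace (sign b * (binary_point q + (/2) ^ length q * binary_point (b :: r)
                     - binary_point q))
    with ((/2) ^ length q * (sign b * binary_point (b :: r))) by ring.
  apply Rmult_le_compat_l; [apply pow_le; lra|].
  apply sign_binary_point_cons.
Qed.

Definition ramp (t d x : R) : R := ReLU (x - t) - ReLU (x - t - d).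

Lemma ramp_below (t d x : R) : 0 <= d -> x <= t -> ramp t d x = 0.
Proof.
  intros Hd Hx; unfold ramp, ReLU.
  rewrite !Rmax_left by lra; ring.
Qed.

Lemma ramp_above (t d x : R) : 0 <= d -> t + d <= x -> ramp t d x = d.
Proof.
  intros Hd Hx; unfold ramp, ReLU.
  rewrite !Rmax_right by lra; ring.
Qed.

Lemma ramp_in_N (t d : R) : 0 <= d -> -1 <= t -> t + d <= 1 -> in_N (ramp t d).
Proof.
  intros Hd Ht Htd.
  exists 1, 1, (-t), (-t - d), 1, (-1), 0.
  unfold in_unit; repeat split; try lra.
  intros x _; unfold ramp.
  replace (1 * x + - t) with (x - t) by ring.
  replace (1 * x + (- t - d)) with (x - t - d) by ring.
  ring.
Qed.

Definition binary_tree (m : nat) : tree :=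
  mkTree binary_point (fun _ b => if b then 0 else (/2) ^ m).

Lemma binary_tree_valid (m : nat) : valid_tree m (binary_tree m).
Proof.
  intros p _; simpl; split.
  - pose proof (binary_point_bound p).
    pose proof (pow_lt (/2) (length p) ltac:(lra)).
    unfold in_unit; lra.
  - pose proof (pow_lt (/2) m ltac:(lra)); lra.
Qed.

Lemma binary_tree_shattered (m : nat) : shattered m (binary_tree m).
Proof.
  intros path Hlen.
  set (d := (/2) ^ m); set (t := binary_point path).
  assert (Hd : 0 < d) by (apply pow_lt; lra).
  assert (Ht : - (1 - d) <= t <= 1 - d)
    by (subst t d; rewrite <- Hlen; apply binary_point_bound).
  exists (ramp t d); split; [apply ramp_in_N; lra|].
  intros i Hi; simpl.
  pose proof (binary_point_separation path i ltac:(lia)) as Hsep.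
  rewrite Hlen in Hsep; fold d t in Hsep.
  destruct (nth i path false); simpl in Hsep.
  - apply ramp_below; lra.
  - apply (ramp_above t d); lra.
Qed.

Theorem theoremE1 : forall m : nat, exists T : tree, valid_tree m T /\ shattered m T.
Proof.
  intros m; exists (binary_tree m).
  split; [apply binary_tree_valid | apply binary_tree_shattered].
Qed.
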